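(* For any two graphs $G_1$ and $G_2$, $\chi_L(G_1+G_2)=\chi_{L_2}(G_1)+\chi_{L_2}(G_2)$.
   Context: All graphs are finite and simple (not necessarily connected for $G_1,G_2$). A proper $k$-coloring of $G$ is a map $f$ from $V(G)$ onto $[k]=\{1,\dots,k\}$ with adjacent vertices receiving different colors; for $S\subseteq V(G)$, $f(S)=\{f(u):u\in S\}$, and $N_G(u)$ is the set of neighbors of $u$. A proper $k$-coloring $f$ is a neighbor locating coloring if for any two distinct vertices $u,v$ with $f(u)=f(v)$ we have $f(N_G(u))\ne f(N_G(v))$; the neighbor locating chromatic number $\chi_{L_2}(G)$ is the minimum number of colors in a neighbor locating coloring of $G$. For a connected graph $G$ with proper $k$-coloring $f$ and color classes $V_i=f^{-1}(i)$, the color code of $v$ is $(d(v,V_1),\dots,d(v,V_k))$, where $d(v,S)=\min_{x\in S}d(v,x)$; $f$ is a locating coloring if distinct vertices have distinct color codes, and $\chi_L(G)$ is the minimum number of colors in a locating coloring. The join $G_1+G_2$ is the disjoint union of $G_1$ and $G_2$ together with all edges joining a vertex of $G_1$ to a vertex of $G_2$. *)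

From mathcomp Require Import all_boot.
Set Implicit Arguments. Unset Strict Implicit. Unset Printing Implicit Defensive.


Record sgraph := SGraph {
  vert : finType;
  adj : rel vert;
  adj_sym : symmetric adj;
  adj_irr : irreflexive adj }.

Definition join_adj (G1 G2 : sgraph) : rel (vert G1 + vert G2)%type :=
  fun x y => match x, y with
  | inl a, inl b => adj a b
  | inr a, inr b => adj a b
  | _, _ => true
  end.

Lemma join_adj_sym (G1 G2 : sgraph) : symmetric (@join_adj G1 G2).
Proof. by case=> [a|a] [b|b] //=; apply: adj_sym. Qed.

Lemma join_adj_irr (G1 G2 : sgraph) : irreflexive (@join_adj G1 G2).
Proof. by case=> a /=; apply: adj_irr. Qed.

Definition join (G1 G2 : sgraph) : sgraph :=
  SGraph (@join_adj_sym G1 G2) (@join_adj_irr G1 G2).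

Section Colorings.
Variable G : sgraph.
Local Notation V := (vert G).
Local Notation e := (@adj G).

(* Colors are 'I_k (i.e. 0..k-1 instead of 1..k). *)
Definition proper_onto k (f : {ffun V -> 'I_k}) : bool :=
  [forall u, forall v, e u v ==> (f u != f v)] &&
  [forall i, exists v, f v == i].

Definition nbhd (u : V) : {set V} := [set w | e u w].

Definition nlc k (f : {ffun V -> 'I_k}) : bool :=
  proper_onto f &&
  [forall u, forall v, ((u != v) && (f u == f v)) ==>
                        (f @: nbhd u != f @: nbhd v)].

Fixpoint walkb (n : nat) (u v : V) : bool :=
  match n with
  | 0 => u == v
  | n'.+1 => [exists w, e u w && walkb n' w v]
  end.

(* graph distance (shortest walk length); for connected graphs this is the
   usual distance since it is < #|V|; unreachable pairs get #|V|. *)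
Definition dist (u v : V) : nat :=
  \big[minn/#|V|]_(n < #|V| | walkb n u v) n.

Definition dist_set (v : V) (S : {set V}) : nat :=
  \big[minn/#|V|]_(x in S) dist v x.

Definition color_code k (f : {ffun V -> 'I_k}) (v : V) : {ffun 'I_k -> nat} :=
  [ffun i => dist_set v (f @^-1: [set i])].

Definition lc k (f : {ffun V -> 'I_k}) : bool :=
  proper_onto f &&
  [forall u, forall v, (u != v) ==> (color_code f u != color_code f v)].


(* minimum number of colors; the bound #|V| is always attained
   (all vertices distinctly colored), so this is the true minimum. *)
Definition chi_L2 : nat :=
  \big[minn/#|V|]_(k < #|V|.+1 | [exists f : {ffun V -> 'I_k}, nlc f]) k.

Definition chi_L : nat :=
  \big[minn/#|V|]_(k < #|V|.+1 | [exists f : {ffun V -> 'I_k}, lc f]) k.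

End Colorings.

From mathcomp Require Import all_boot.
Set Implicit Arguments. Unset Strict Implicit. Unset Printing Implicit Defensive.

(* In the join G1 + G2 any two vertices are at distance at most 2, so the
   color code of w at color i is 0, 1 or 2 according as w has color i, some
   neighbor of w has color i, or neither.  Hence a coloring of a join is
   locating exactly when it is neighbor locating: chi_L (G1 + G2) equals
   chi_L2 (G1 + G2).  Since every vertex of G1 is adjacent to every vertex of
   G2, the two sides of a proper coloring use disjoint color sets, and the
   colors around a vertex are those of its neighbors on its own side together
   with all the colors of the other side.  So the neighbor locating colorings
   of the join are exactly the disjoint unions of neighbor locating colorings
   of G1 and of G2, and chi_L2 is additive under joins. *)

Lemma leq_bigmin (I : finType) (P : pred I) (F : I -> nat) x0 m :
  (\big[minn/x0]_(i | P i) F i <= m) = (x0 <= m) || [exists i, P i && (F i <= m)].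
Proof.
rewrite unlock /reducebig.
have -> : [exists i, P i && (F i <= m)] = has (fun i => P i && (F i <= m)) (index_enum I).
  by apply/existsP/hasP => [[i Hi]|[i _ Hi]]; [exists i; rewrite ?mem_index_enum|exists i].
elim: (index_enum I) => [|i r IH] /=; first by rewrite orbF.
by case: (P i) => //=; rewrite geq_min IH orbCA.
Qed.

Lemma bigmin_nat_spec N (P : pred nat) : P N ->
  P (\big[minn/N]_(k < N.+1 | P k) k) /\
  forall k, k <= N -> P k -> \big[minn/N]_(k < N.+1 | P k) k <= k.
Proof.
move=> PN; split.
  by apply: (big_ind P) => // x y Px Py; rewrite /minn; case: ifP.
move=> k le_kN Pk; rewrite leq_bigmin; apply/orP; right.
by apply/existsP; exists (Ordinal (le_kN : k < N.+1)); rewrite /= Pk leqnn.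
Qed.

Section Distance.
Variable G : sgraph.
Implicit Types u v w : vert G.

Lemma walkb1 u v : walkb 1 u v = adj u v.
Proof.
by apply/existsP/idP => [[w /andP[uw /eqP <-]] // | uv]; exists v; rewrite uv /=.
Qed.

Lemma leq_dist u v n : n < #|vert G| ->
  (dist u v <= n) = [exists m : 'I_#|vert G|, (m <= n) && walkb m u v].
Proof.
move=> lt_n; rewrite /dist leq_bigmin leqNgt lt_n.
by apply: eq_existsb => m; rewrite andbC.
Qed.

Lemma leq_dist_set v (S : {set vert G}) n : n < #|vert G| ->
  (dist_set v S <= n) = [exists x in S, dist v x <= n].
Proof. by move=> lt_n; rewrite /dist_set leq_bigmin leqNgt lt_n. Qed.

Lemma dist_set_le v (S : {set vert G}) x : x \in S -> dist_set v S <= dist v x.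
Proof.
move=> Sx; rewrite /dist_set leq_bigmin; apply/orP; right.
by apply/existsP; exists x; rewrite Sx /=.
Qed.

Lemma dist_leq0 u v : 0 < #|vert G| -> (dist u v <= 0) = (u == v).
Proof.
move=> n0; rewrite leq_dist //; apply/existsP/idP => [[[[|m] ?] //]|uv].
by exists (Ordinal n0).
Qed.

Lemma dist_leq1 u v : 1 < #|vert G| -> (dist u v <= 1) = (u == v) || adj u v.
Proof.
move=> n1; rewrite leq_dist //; apply/existsP/idP => [[[[|[|m]] ?] //=]|].
- by move=> ->.
- by move=> uv; apply/orP; right; rewrite -walkb1.
case/orP=> [uv|uv]; first by exists (Ordinal (ltnW n1)).
by exists (Ordinal n1); rewrite walkb1.
Qed.

Lemma walkb2 u v : walkb 2 u v = [exists w, adj u w && adj w v].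
Proof. by apply: eq_existsb => w; rewrite -(walkb1 w v). Qed.

End Distance.

Section ColoringMaps.
Variables (G : sgraph) (T : finType).
Implicit Types (g : vert G -> T) (u v : vert G).

Definition proper_map g := forall u v, adj u v -> g u != g v.

Definition nbhd_locating g :=
  forall u v, u != v -> g u = g v -> g @: nbhd u != g @: nbhd v.

End ColoringMaps.

Lemma proper_ontoP (G : sgraph) k (f : {ffun vert G -> 'I_k}) :
  reflect (proper_map f /\ forall i, exists v, f v = i) (proper_onto f).
Proof.
apply: (iffP andP) => [[/forallP pf /forallP onto]|[pf onto]]; split.
- by move=> u v; have /forallP/(_ v)/implyP := pf u.
- by move=> i; have /existsP[v /eqP] := onto i; exists v.
- by apply/forallP=> u; apply/forallP=> v; apply/implyP/pf.
- by apply/forallP=> i; have [v fv] := onto i; apply/existsP; exists v; rewrite fv.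
Qed.

Lemma nlcP (G : sgraph) k (f : {ffun vert G -> 'I_k}) :
  reflect [/\ proper_map f, forall i, exists v, f v = i & nbhd_locating f] (nlc f).
Proof.
apply: (iffP andP) => [[/proper_ontoP[pf onto] /forallP loc]|[pf onto loc]].
  split=> // u v uv fuv.
  by have /forallP/(_ v)/implyP := loc u; apply; rewrite uv fuv /=.
split; first exact/proper_ontoP.
by apply/forallP=> u; apply/forallP=> v; apply/implyP=> /andP[uv /eqP]; apply: loc.
Qed.

Lemma proper_map_notin_nbhd (G : sgraph) (T : finType) (g : vert G -> T) w :
  proper_map g -> g w \notin g @: nbhd w.
Proof. by move=> pg; apply/imsetP=> [[x]]; rewrite inE => /pg /eqP. Qed.

Section InjectiveRecoloring.
Variables (G : sgraph) (T T' : finType) (h : T' -> T) (g : vert G -> T) (f : vert G -> T').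
Hypotheses (h_inj : injective h) (g_hf : forall v, g v = h (f v)).

Lemma proper_map_inj : proper_map g <-> proper_map f.
Proof. by split=> pf u v /pf; rewrite !g_hf (inj_eq h_inj). Qed.

Lemma nbhd_locating_inj : nbhd_locating g <-> nbhd_locating f.
Proof.
have img (A : {set vert G}) : g @: A = h @: (f @: A) by rewrite -imset_comp; apply: eq_imset.
split=> loc u v uv fuv.
  by rewrite -(inj_eq (imset_inj h_inj)) -!img; apply: loc; rewrite // !g_hf fuv.
by rewrite !img (inj_eq (imset_inj h_inj)); apply: loc => //; apply: h_inj; rewrite -!g_hf.
Qed.

End InjectiveRecoloring.

Lemma nlc_of_map (G : sgraph) (T : finType) (g : vert G -> T) :
  proper_map g -> nbhd_locating g -> exists f : {ffun vert G -> 'I_#|g @: setT|}, nlc f.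
Proof.
move=> pg lg; pose f := [ffun v => enum_rank_in (imset_f g (in_setT v)) (g v)].
have fK v : g v = enum_val (f v) by rewrite ffunE enum_rankK_in // imset_f.
exists f; apply/nlcP; split.
- exact/(proper_map_inj enum_val_inj fK).
- move=> i; case/imsetP: (enum_valP i) => v _ giv.
  by exists v; apply: enum_val_inj; rewrite -fK.
- exact/(nbhd_locating_inj enum_val_inj fK).
Qed.

Section NeighborLocatingNumber.
Variable G : sgraph.

Lemma nlc_card k (f : {ffun vert G -> 'I_k}) : nlc f -> k <= #|vert G|.
Proof.
case/nlcP=> _ onto _; rewrite -[k]card_ord -cardsT.
apply: leq_trans (leq_imset_card f setT); rewrite -cardsT; apply: subset_leq_card.
by apply/subsetP=> i _; have [v <-] := onto i; rewrite imset_f ?inE.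
Qed.

Let nlc_colorable k := [exists f : {ffun vert G -> 'I_k}, nlc f].

Lemma nlc_discrete : nlc_colorable #|vert G|.
Proof.
have id_proper : proper_map (@id (vert G)).
  by move=> u v; apply: contraTneq => ->; rewrite adj_irr.
have id_locating : nbhd_locating (@id (vert G)) by move=> u v /eqP.
have [f hf] := nlc_of_map id_proper id_locating.
by apply/existsP; move: f hf; rewrite card_imset // cardsT => f hf; exists f.
Qed.

Lemma chi_L2_attained : exists f : {ffun vert G -> 'I_(chi_L2 G)}, nlc f.
Proof. by apply/existsP; case: (bigmin_nat_spec nlc_discrete). Qed.

Lemma chi_L2_le k (f : {ffun vert G -> 'I_k}) : nlc f -> chi_L2 G <= k.
Proof.
move=> hf; case: (bigmin_nat_spec nlc_discrete) => _; apply; first exact: nlc_card hf.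
by apply/existsP; exists f.
Qed.

End NeighborLocatingNumber.

Section DiameterTwo.
Variable G : sgraph.
(* [dist] defaults to #|vert G| on unreachable pairs; [card_gt1] keeps this
   default from interfering with distances 0 and 1. *)
Hypotheses (card_gt1 : 1 < #|vert G|) (diam2 : forall u v : vert G, dist u v <= 2).

Lemma color_code_diam2 k (f : {ffun vert G -> 'I_k}) w i : (exists v, f v = i) ->
  color_code f w i = if f w == i then 0 else if i \in f @: nbhd w then 1 else 2.
Proof.
move=> [v fv]; rewrite ffunE; set d := dist_set _ _.
have le0 : (d <= 0) = (f w == i).
  rewrite leq_dist_set ?(ltnW card_gt1) //; apply/existsP/idP => [[x]|fw].
    by rewrite !inE dist_leq0 ?(ltnW card_gt1) // => /andP[/eqP <- /eqP ->].
  by exists w; rewrite !inE fw dist_leq0 ?(ltnW card_gt1) /=.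
have le1 : (d <= 1) = (f w == i) || (i \in f @: nbhd w).
  rewrite leq_dist_set //; apply/existsP/idP => [[x]|].
    rewrite !inE dist_leq1 // => /andP[/eqP <- /orP[/eqP -> | wx]]; first by rewrite eqxx.
    by rewrite imset_f ?orbT ?inE.
  case/orP=> [fw | /imsetP[x]]; first by exists w; rewrite !inE fw dist_leq1 ?eqxx.
  by rewrite inE => wx ->; exists x; rewrite !inE eqxx dist_leq1 // wx orbT.
have le2 : d <= 2 by apply: leq_trans (dist_set_le w _) (diam2 w v); rewrite !inE fv.
case: ifP le0 le1 => [_ d0 _|_ d_gt0]; first by apply/eqP; rewrite -leqn0 d0.
case: ifP => _ /= le1; apply/eqP; rewrite eqn_leq.
  by rewrite le1 ltnNge d_gt0.
by rewrite le2 ltnNge le1.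
Qed.

Lemma color_code_eq k (f : {ffun vert G -> 'I_k}) u v : proper_onto f ->
  (color_code f u == color_code f v) = (f u == f v) && (f @: nbhd u == f @: nbhd v).
Proof.
move=> /proper_ontoP[pf onto]; have code w i := color_code_diam2 w (onto i).
apply/eqP/andP => [E|[/eqP fuv /eqP Nuv]]; last by apply/ffunP=> i; rewrite !code fuv Nuv.
have fuv : f u = f v.
  by move/ffunP: E => /(_ (f u)); rewrite !code eqxx; case: eqP => //; case: ifP.
split; first by rewrite fuv.
apply/eqP/setP => i; move/ffunP: E => /(_ i); rewrite !code fuv.
case: eqP => [<- _|_]; last by do 2 case: ifP.
by rewrite -{1}fuv !(negbTE (proper_map_notin_nbhd _ pf)).
Qed.

Lemma lc_diam2 k (f : {ffun vert G -> 'I_k}) : lc f = nlc f.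
Proof.
rewrite /lc /nlc; case pof: (proper_onto f) => //=.
apply: eq_forallb => u; apply: eq_forallb => v.
by rewrite color_code_eq // negb_and; case: (u != v); case: (f u == f v).
Qed.

Lemma chi_L_diam2 : chi_L G = chi_L2 G.
Proof. by apply: eq_bigl => k; apply: eq_existsb => f; rewrite lc_diam2. Qed.

End DiameterTwo.

Lemma setUr_disjoint_inj (T : finType) (A1 A2 B : {set T}) :
  [disjoint A1 & B] -> [disjoint A2 & B] -> A1 :|: B = A2 :|: B -> A1 = A2.
Proof.
move=> /setDidPl dis1 /setDidPl dis2 E.
by rewrite -dis1 -dis2 -[A1 :\: B]setU0 -(setDv B) -setDUl E setDUl setDv setU0.
Qed.

Section Join.
Variables G1 G2 : sgraph.
Local Notation J := (join G1 G2).

Lemma setT_join : [set: vert J] = inl @: setT :|: inr @: setT.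
Proof. by apply/setP => -[x|x]; rewrite !inE imset_f ?orbT. Qed.

Lemma nbhd_inl a : nbhd (inl a : vert J) = inl @: nbhd a :|: inr @: setT.
Proof.
apply/setP => -[x|x]; rewrite !inE /=.
  by rewrite (mem_imset _ _ inl_inj) inE; case: imsetP => [[y _] //|_]; rewrite orbF.
by rewrite (imset_f _ (in_setT x)) orbT.
Qed.

Lemma nbhd_inr b : nbhd (inr b : vert J) = inl @: setT :|: inr @: nbhd b.
Proof.
apply/setP => -[x|x]; rewrite !inE /=; first by rewrite (imset_f _ (in_setT x)).
by rewrite (mem_imset _ _ inr_inj) inE; case: imsetP => [[y _] //|_].
Qed.

Lemma proper_map_join (T : finType) (g : vert J -> T) :
  proper_map g <->
  [/\ proper_map (g \o inl), proper_map (g \o inr) & forall a b, g (inl a) != g (inr b)].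
Proof.
split=> [pg|[p1 p2 cross] [a|a] [b|b] //= ab].
  by split=> [a b ab|a b ab|a b]; [apply: (pg (inl a)) | apply: (pg (inr a)) | apply: pg].
- exact: p1.
- by rewrite eq_sym.
- exact: p2.
Qed.

Lemma disjoint_join_colors (T : finType) (g : vert J -> T) : proper_map g ->
  forall (A : {set vert G1}) (B : {set vert G2}),
  [disjoint (g \o inl) @: A & (g \o inr) @: B].
Proof.
case/proper_map_join => _ _ cross A B; rewrite disjoints_subset.
apply/subsetP => _ /imsetP[a _ ->]; rewrite inE; apply/imsetP => -[b _ gab].
by move: (cross a b); rewrite [g (inl a)]gab eqxx.
Qed.

Lemma nbhd_locating_join (T : finType) (g : vert J -> T) : proper_map g ->
  nbhd_locating g <-> nbhd_locating (g \o inl) /\ nbhd_locating (g \o inr).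
Proof.
move=> pg; have dis := disjoint_join_colors pg.
have [_ _ cross] := (proper_map_join g).1 pg.
have colors_inl a : g @: nbhd (inl a : vert J) = (g \o inl) @: nbhd a :|: (g \o inr) @: setT.
  by rewrite nbhd_inl imsetU -!imset_comp.
have colors_inr b : g @: nbhd (inr b : vert J) = (g \o inr) @: nbhd b :|: (g \o inl) @: setT.
  by rewrite nbhd_inr imsetU -!imset_comp setUC.
split=> [loc | [loc1 loc2] [a|a] [b|b] ab gab].
- split=> a b ab gab.
    have /loc/(_ gab) : inl a != inl b :> vert J by [].
    by apply: contra => /eqP E; rewrite !colors_inl E.
  have /loc/(_ gab) : inr a != inr b :> vert J by [].
  by apply: contra => /eqP E; rewrite !colors_inr E.
- apply: contra (loc1 a b ab gab) => /eqP E; apply/eqP.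
  by apply: (setUr_disjoint_inj (dis _ setT) (dis _ setT)); rewrite -!colors_inl.
- by move: (cross a b); rewrite [g (inl a)]gab eqxx.
- by move: (cross b a); rewrite gab eqxx.
- apply: contra (loc2 a b ab gab) => /eqP E; apply/eqP.
  have dis' (A : {set vert G2}) : [disjoint (g \o inr) @: A & (g \o inl) @: setT].
    by rewrite disjoint_sym; apply: dis.
  by apply: (setUr_disjoint_inj (dis' _) (dis' _)); rewrite -!colors_inr.
Qed.

Lemma nlc_join_split k (f : {ffun vert J -> 'I_k}) : nlc f ->
  exists k1 k2, [/\ k = k1 + k2, exists f1 : {ffun vert G1 -> 'I_k1}, nlc f1
                                 & exists f2 : {ffun vert G2 -> 'I_k2}, nlc f2].
Proof.
case/nlcP=> pf onto loc.
have [p1 p2 _] := (proper_map_join f).1 pf.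
have [loc1 loc2] := (nbhd_locating_join pf).1 loc.
exists #|(f \o inl) @: setT|, #|(f \o inr) @: setT|.
split; [|exact: nlc_of_map|exact: nlc_of_map].
have imgT : f @: setT = [set: 'I_k].
  by apply/setP=> i; rewrite inE; have [v <-] := onto i; apply: imset_f.
rewrite -cardsUI (disjoint_setI0 (disjoint_join_colors pf setT setT)) cards0 addn0.
by rewrite (imset_comp f inl) (imset_comp f inr) -imsetU -setT_join imgT cardsT card_ord.
Qed.

Definition join_coloring k1 k2 (f1 : {ffun vert G1 -> 'I_k1})
    (f2 : {ffun vert G2 -> 'I_k2}) : {ffun vert J -> 'I_(k1 + k2)} :=
  [ffun x => match x with inl a => lshift k2 (f1 a) | inr b => rshift k1 (f2 b) end].

Lemma nlc_join_coloring k1 k2 (f1 : {ffun vert G1 -> 'I_k1})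
    (f2 : {ffun vert G2 -> 'I_k2}) :
  nlc f1 -> nlc f2 -> nlc (join_coloring f1 f2).
Proof.
case/nlcP=> pf1 onto1 loc1 /nlcP[pf2 onto2 loc2]; set F := join_coloring f1 f2.
have F1 a : F (inl a) = lshift k2 (f1 a) by rewrite ffunE.
have F2 b : F (inr b) = rshift k1 (f2 b) by rewrite ffunE.
have pF : proper_map F.
  apply/proper_map_join; split.
  - exact/(proper_map_inj (@lshift_inj _ _) F1).
  - exact/(proper_map_inj (@rshift_inj _ _) F2).
  - by move=> a b; rewrite F1 F2 eq_lrshift.
apply/nlcP; split=> //.
  move=> i; case: (splitP i) => j ij.
    by have [a faj] := onto1 j; exists (inl a); apply: val_inj; rewrite F1 /= faj ij.
  by have [b fbj] := onto2 j; exists (inr b); apply: val_inj; rewrite F2 /= fbj ij.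
apply/(nbhd_locating_join pF); split.
  exact/(nbhd_locating_inj (@lshift_inj _ _) F1).
exact/(nbhd_locating_inj (@rshift_inj _ _) F2).
Qed.

End Join.

Section JoinDistance.
Variables (G1 G2 : sgraph) (u1 : vert G1) (u2 : vert G2).
Local Notation J := (join G1 G2).

Lemma card_join_gt1 : 1 < #|vert J|.
Proof.
by rewrite card_sum; apply: (@leq_add 1 1); apply/card_gt0P; [exists u1 | exists u2].
Qed.

Lemma join_adj_or_walkb2 (u v : vert J) : adj u v || walkb 2 u v.
Proof.
rewrite walkb2; case: u v => [a|a] [b|b] //; apply/orP; right; apply/existsP.
  by exists (inr u2).
by exists (inl u1).
Qed.

Lemma join_dist_le2 (u v : vert J) : dist u v <= 2.
Proof.
rewrite /dist leq_bigmin; case: leqP => //= card_gt2; apply/existsP.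
case/orP: (join_adj_or_walkb2 u v) => [uv|walk2].
  by exists (Ordinal (ltnW card_gt2)); rewrite -walkb1 in uv; rewrite uv.
by exists (Ordinal card_gt2); rewrite walk2.
Qed.

End JoinDistance.

Lemma chi_L2_join (G1 G2 : sgraph) : chi_L2 (join G1 G2) = chi_L2 G1 + chi_L2 G2.
Proof.
apply/eqP; rewrite eqn_leq; apply/andP; split.
  have [f1 h1] := chi_L2_attained G1; have [f2 h2] := chi_L2_attained G2.
  exact: chi_L2_le (nlc_join_coloring h1 h2).
have [f hf] := chi_L2_attained (join G1 G2).
have [k1 [k2 [-> [f1 h1] [f2 h2]]]] := nlc_join_split hf.
exact: leq_add (chi_L2_le h1) (chi_L2_le h2).
Qed.

Theorem theorem1 (G1 G2 : sgraph) :
  0 < #|vert G1| -> 0 < #|vert G2| ->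
  chi_L (join G1 G2) = chi_L2 G1 + chi_L2 G2.
Proof.
move=> /card_gt0P[u1 _] /card_gt0P[u2 _].
rewrite (chi_L_diam2 (card_join_gt1 u1 u2) (join_dist_le2 u1 u2)).
exact: chi_L2_join.
Qed.
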